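(* Let $A$ be a $2r\times2r$ integer matrix. Then $A$ is (integrally) null-cobordant if and only if it is rationally null-cobordant.
   Context: $'$ denotes transpose. A $2r\times 2r$ integer matrix $A$ is null-cobordant if there is $P\in GL_{2r}(\mathbb Z)$ with $P'AP=\begin{pmatrix}0&N_1\\N_2&N_3\end{pmatrix}$, each $N_i$ an $r\times r$ block; a $2r\times2r$ rational matrix $A$ is rationally null-cobordant if such a $P$ exists in $GL_{2r}(\mathbb Q)$ (equivalently, the bilinear form $(x,y)\mapsto x'Ay$ on $\mathbb Q^{2r}$ vanishes on some $r$-dimensional subspace). *)

From mathcomp Require Import all_boot all_order all_algebra.
Set Implicit Arguments. Unset Strict Implicit. Unset Printing Implicit Defensive.
Import GRing.Theory Num.Theory.
Local Open Scope ring_scope.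

Definition null_cobordant (r : nat) (A : 'M[int]_(r + r)) : Prop :=
  exists P : 'M[int]_(r + r), P \in unitmx /\
    exists N1 N2 N3 : 'M[int]_r, P^T *m A *m P = block_mx 0 N1 N2 N3.

Definition rat_null_cobordant (r : nat) (A : 'M[rat]_(r + r)) : Prop :=
  exists P : 'M[rat]_(r + r), P \in unitmx /\
    exists N1 N2 N3 : 'M[rat]_r, P^T *m A *m P = block_mx 0 N1 N2 N3.

From mathcomp Require Import all_boot all_order all_algebra.
Set Implicit Arguments. Unset Strict Implicit. Unset Printing Implicit Defensive.
Import GRing.Theory Num.Theory.
Local Open Scope ring_scope.

(* A null-cobordism is the same as a basis of Z^2r (or Q^2r) whose first r
   vectors span a subspace on which the form vanishes.  Over Q, take such r
   independent vectors and clear denominators: this gives an integer matrix M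
   of full column rank with M^T A M = 0.  By the Smith normal form,
   M = L [D; 0] R with L, R unimodular and D diagonal; full rank forces the
   entries of D to be nonzero, so the first r columns of L are nonzero
   rational multiples of vectors in the isotropic span of M.  Hence they are
   isotropic and L is an integral null-cobordism. *)

Definition isotropic (R : pzRingType) m k (A : 'M[R]_m) (Q : 'M[R]_(m, k)) :=
  Q^T *m A *m Q = 0.

Section Congruence.

Variable R : comPzRingType.

Lemma isotropic_mulmxr m k l (A : 'M[R]_m) (Q : 'M_(m, k)) (B : 'M_(k, l)) :
  isotropic A Q -> isotropic A (Q *m B).
Proof.
rewrite /isotropic trmx_mul => QAQ0.
by rewrite !mulmxA -(mulmxA B^T) -(mulmxA B^T) QAQ0 mulmx0 mul0mx.
Qed.

Lemma ulsubmx_congr m n (A : 'M[R]_(m + n)) (P : 'M_(m + n)) :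
  ulsubmx (P^T *m A *m P) = (lsubmx P)^T *m A *m lsubmx P.
Proof.
by rewrite -{1 2}[P]hsubmxK tr_row_mx mul_col_mx mul_col_row block_mxKul.
Qed.

Lemma block0_congrP m n (A : 'M[R]_(m + n)) (P : 'M_(m + n)) :
  (exists N1 N2 N3, P^T *m A *m P = block_mx 0 N1 N2 N3) <->
  isotropic A (lsubmx P).
Proof.
rewrite /isotropic -ulsubmx_congr; split=> [[N1 [N2 [N3 ->]]] | ul0].
  exact: block_mxKul.
by exists (ursubmx (P^T *m A *m P)), (dlsubmx (P^T *m A *m P)),
  (drsubmx (P^T *m A *m P)); rewrite -ul0 submxK.
Qed.

Lemma isotropic_map_mx (S : comPzRingType) (f : {rmorphism R -> S}) m k
    (A : 'M[R]_m) (Q : 'M_(m, k)) :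
  isotropic A Q -> isotropic (map_mx f A) (map_mx f Q).
Proof. by rewrite /isotropic map_trmx -!map_mxM => ->; rewrite map_mx0. Qed.

End Congruence.

Lemma lsubmx_unitmx_ker0 (R : comUnitRingType) m n (P : 'M[R]_(m + n)) :
  P \in unitmx -> forall x : 'cV_m, lsubmx P *m x = 0 -> x = 0.
Proof.
move=> Pu x Px0; have : P *m col_mx x 0 = 0.
  by rewrite -[P]hsubmxK mul_row_col mulmx0 addr0.
by move/(congr1 (mulmx (invmx P))); rewrite mulKmx // mulmx0 => /eqP;
  rewrite col_mx_eq0 => /andP[/eqP].
Qed.

Lemma map_mx_unitmx (R S : comUnitRingType) (f : {rmorphism R -> S}) n
    (P : 'M[R]_n) :
  P \in unitmx -> map_mx f P \in unitmx.
Proof. by rewrite !unitmxE det_map_mx; apply: rmorph_unit. Qed.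

Lemma map_mx_injective (T U : Type) (f : T -> U) m n :
  injective f -> injective (map_mx f : 'M_(m, n) -> 'M_(m, n)).
Proof.
move=> f_inj A B /matrixP AB; apply/matrixP => i j.
by apply: f_inj; have := AB i j; rewrite !mxE.
Qed.

Lemma isotropic_diag_cancel (R : idomainType) m k (A : 'M[R]_m)
    (Q : 'M_(m, k)) (d : 'rV_k) :
  (forall i, d 0 i != 0) -> isotropic A (Q *m diag_mx d) -> isotropic A Q.
Proof.
move=> d_neq0; rewrite /isotropic trmx_mul tr_diag_mx !mulmxA.
rewrite -!(mulmxA (diag_mx d)) mul_diag_mx mul_mx_diag => /matrixP QAQ0.
apply/matrixP => i j; have /eqP := QAQ0 i j.
by rewrite !mxE !mulf_eq0 (negbTE (d_neq0 i)) (negbTE (d_neq0 j)) orbF => /eqP.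
Qed.

Lemma rat_mx_int_multiple m n (Q : 'M[rat]_(m, n)) :
  exists2 c : int, c != 0 & exists M : 'M[int]_(m, n), map_mx intr M = c%:~R *: Q.
Proof.
exists (\prod_(k : 'I_m * 'I_n) denq (Q k.1 k.2)).
  by apply/prodf_neq0 => k _; apply: denq_neq0.
exists (\matrix_(i, j) (numq (Q i j) * \prod_(k | k != (i, j)) denq (Q k.1 k.2))).
apply/matrixP => i j; rewrite !mxE rmorphM /= numqE.
by rewrite [X in _ = X%:~R * _](bigD1 (i, j)) //= rmorphM /= [RHS]mulrC mulrA.
Qed.

Lemma rat_isotropic_int_multiple m k (A : 'M[int]_m) (Q : 'M[rat]_(m, k)) :
  isotropic (map_mx intr A) Q -> (forall x : 'cV_k, Q *m x = 0 -> x = 0) ->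
  exists M : 'M[int]_(m, k),
    isotropic A M /\ forall x : 'cV_k, M *m x = 0 -> x = 0.
Proof.
move=> QA0 Q_ker0; have [c c_neq0 [M McQ]] := rat_mx_int_multiple Q.
have cQ_neq0 : c%:~R != 0 :> rat by rewrite intr_eq0.
have map_inj p q := @map_mx_injective _ _ (intr : int -> rat) p q (@intr_inj _).
exists M; split=> [|x Mx0].
  apply: map_inj; rewrite map_mx0 !map_mxM -map_trmx McQ [(_ *: _)^T]linearZ /=.
  by rewrite -scalemxAr -!scalemxAl QA0 !scaler0.
apply: map_inj; rewrite map_mx0; apply: Q_ker0; apply: (scalerI cQ_neq0).
by rewrite scaler0 scalemxAl -McQ -map_mxM Mx0 map_mx0.
Qed.

Lemma int_Smith_full_column_rank r s (M : 'M[int]_(r + s, r)) :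
  (forall x : 'cV_r, M *m x = 0 -> x = 0) ->
  exists L, exists R, exists d : 'rV_r,
    [/\ L \in unitmx, R \in unitmx, forall i, d 0 i != 0
      & M = lsubmx L *m diag_mx d *m R].
Proof.
move=> M_ker0; have [L Lu [R Ru [ds _ defM]]] := int_Smith_normal_form M.
pose d : 'rV_r := \row_i ds`_i; set D := \matrix_(i, j) _ in defM.
have defD : D = col_mx (diag_mx d) 0.
  apply/matrixP => i j; rewrite -(splitK i); case: (split i) => k /=.
    by rewrite col_mxEu !mxE.
  by rewrite col_mxEd !mxE /= gtn_eqF ?mulr0n // ltn_addr.
have {}defM : M = lsubmx L *m diag_mx d *m R.
  by rewrite defM defD -{1}[L]hsubmxK mul_row_col mulmx0 addr0.
exists L, R, d; split=> // j; rewrite mxE; apply/eqP => dj0.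
suff /(congr1 (mulmx R)) : invmx R *m delta_mx j (0 : 'I_1) = 0.
  by rewrite mulKVmx // mulmx0 => /matrixP/(_ j 0); rewrite !mxE !eqxx.
apply: M_ker0; rewrite defM -mulmxA mulKVmx // -mulmxA mul_diag_mx.
suff -> : \matrix_(i, k) (d 0 i * delta_mx j 0 i k) = 0 :> 'cV_r by rewrite mulmx0.
apply/matrixP => i k; rewrite !mxE.
by case: (i =P j) => [->|_]; rewrite ?dj0 ?mul0r // mulr0.
Qed.

Lemma isotropic_int_completion r s (A : 'M[int]_(r + s)) (M : 'M_(r + s, r)) :
  isotropic A M -> (forall x : 'cV_r, M *m x = 0 -> x = 0) ->
  exists2 L : 'M_(r + s), L \in unitmx & isotropic A (lsubmx L).
Proof.
move=> MA0 /int_Smith_full_column_rank [L [R [d [Lu Ru d_neq0 defM]]]].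
exists L => //; apply: (isotropic_diag_cancel d_neq0).
by have := isotropic_mulmxr (invmx R) MA0; rewrite defM mulmxK.
Qed.

Theorem mainTheorem20 (r : nat) (A : 'M[int]_(r + r)) :
  null_cobordant A <-> rat_null_cobordant (map_mx (fun z : int => z%:~R : rat) A).
Proof.
change (null_cobordant A <-> rat_null_cobordant (map_mx intr A)).
split=> [] [P [Pu /block0_congrP PA0]].
  exists (map_mx intr P); split; first exact: map_mx_unitmx.
  by apply/block0_congrP; rewrite -map_lsubmx; apply: isotropic_map_mx.
have [M [MA0 M_ker0]] := rat_isotropic_int_multiple PA0 (lsubmx_unitmx_ker0 Pu).
have [L Lu LA0] := isotropic_int_completion MA0 M_ker0.
by exists L; split; last apply/block0_congrP.
Qed.
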